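(* Assume (H1)–(H5) and (H4)$_{st}$. Let $u\in C(\mathbb{R}^n\times[0,T))$ be a viscosity solution of (1.1)–(1.2). Let $(x,t)\in\mathbb{R}^n\times(0,T)$ be a point where $u$ is differentiable and let $(\xi,\eta,u_\xi)\in C^1([0,t];\mathbb{R}^n\times\mathbb{R}^n\times\mathbb{R})$ solve the Lie equation on $[0,t]$ with terminal condition $\xi(t)=x$, $\eta(t)=D_xu(x,t)$, $u_\xi(t)=u(x,t)$. Then: If $(C_1,K_3)\ne(0,0)$, $$|D_xu(x,t)-\eta(0)|\le\Big(\frac{C_1\beta}{C_1+K_3}+|D_xu(x,t)|\Big)(e^{(C_1+K_3)t}-1),\qquad |D_xu(x,t)-\eta(0)|\le\Big(\frac{C_1\beta}{C_1+K_3}+|\eta(0)|\Big)(e^{(C_1+K_3)t}-1),$$ and consequently $$|\eta(0)|e^{-(C_1+K_3)t}-\frac{C_1\beta}{C_1+K_3}(1-e^{-(C_1+K_3)t})\le|D_xu(x,t)|\le|\eta(0)|e^{(C_1+K_3)t}+\frac{C_1\beta}{C_1+K_3}(e^{(C_1+K_3)t}-1).$$ Moreover: if $K_3=0$, $|\eta(0)|e^{-C_1t}-\beta(1-e^{-C_1t})\le|D_xu(x,t)|\le|\eta(0)|e^{C_1t}+\beta(e^{C_1t}-1)$; if $\beta=0$, $|\eta(0)|e^{-(C_1+K_3)t}\le|D_xu(x,t)|\le|\eta(0)|e^{(C_1+K_3)t}$; if $C_1=0$, $|\eta(0)|e^{-K_3t}\le|D_xu(x,t)|\le|\eta(0)|e^{K_3t}$;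 if $(C_1,K_3)=(0,0)$, $D_xu(x,t)=\eta(0)$.
   Context: $T>0$; $H:\mathbb{R}^n\times[0,T]\times\mathbb{R}\times\mathbb{R}^n\to\mathbb{R}$ continuous; $u_0$ Lipschitz. Problem (1.1)–(1.2): $u_t+H(x,t,u,D_xu)=0$ in $\mathbb{R}^n\times(0,T)$, $u(x,0)=u_0(x)$. (H1) there exist $C_1\ge0$, $\beta\in\{0,1\}$ with $|H(x,t,u,p)-H(y,t,u,p)|\le C_1(\beta+|p|)|x-y|$. (H2) there exist $A_2,B_2\ge0$ with $|H(x,t,u,p)-H(x,t,u,q)|\le(A_2|x|+B_2)|p-q|$. (H3) there exists $K_3\ge0$ with $|H(x,t,u,p)-H(x,t,v,p)|\le K_3|u-v|$. (H4) $p\mapsto H(x,t,u,p)$ convex. (H5) $H\in C^2(\mathbb{R}^n\times[0,T]\times\mathbb{R}\times\mathbb{R}^n)$. (H4)$_{st}$ $D_{pp}H(x,t,u,p)$ is positive definite everywhere. Viscosity solution: $u\in C(\mathbb{R}^n\times[0,T))$, $u(\cdot,0)=u_0$, and for every $\phi\in C^1(\mathbb{R}^n\times(0,T))$, if $u-\phi$ has a local max (resp. min) at $(x,t)\in\mathbb{R}^n\times(0,T)$ then $\phi_t+H(x,t,u(x,t),D_x\phi(x,t))\le0$ (resp. $\ge0$). Lie equation: $\xi'(s)=D_pH(\xi(s),s,u_\xi(s),\eta(s))$, $\eta'(s)=-D_xH(\xi(s),s,u_\xi(s),\eta(s))-D_uH(\xi(s),s,u_\xi(s),\eta(s))\eta(s)$,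 $u_\xi'(s)=\langle\eta(s),\xi'(s)\rangle-H(\xi(s),s,u_\xi(s),\eta(s))$. *)

From HB Require Import structures.
From mathcomp Require Import all_boot all_order all_algebra.
From mathcomp Require Import all_classical all_reals all_analysis.
Set Implicit Arguments. Unset Strict Implicit. Unset Printing Implicit Defensive.
Import Order.TTheory GRing.Theory Num.Theory.
Import numFieldNormedType.Exports.
Local Open Scope classical_set_scope.
Local Open Scope ring_scope.

Section Defs.
Variables (R : realType) (n : nat).

Definition enorm (p : 'rV[R]_n) : R := Num.sqrt (\sum_(i < n) p 0 i ^+ 2).
Definition dotv (p q : 'rV[R]_n) : R := \sum_(i < n) p 0 i * q 0 i.
Definition ev (i : 'I_n) : 'rV[R]_n := delta_mx 0 i.

Definition Hc (H : 'rV[R]_n -> R -> R -> 'rV[R]_n -> R)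
  (z : 'rV[R]_n * R * R * 'rV[R]_n) : R := H z.1.1.1 z.1.1.2 z.1.2 z.2.

Definition C2 {V : normedModType R} (f : V -> R) : Prop :=
  continuous f /\
  forall v w : V,
    (forall z, derivable f z v) /\ continuous ('D_v f) /\
    (forall z, derivable ('D_v f) z w) /\ continuous ('D_w ('D_v f)).

Definition DxH H x t u p : 'rV[R]_n :=
  \row_i 'D_((ev i, 0, 0, 0) : 'rV[R]_n * R * R * 'rV[R]_n) (Hc H) (x, t, u, p).
Definition DuH H x t u p : R :=
  'D_((0, 0, 1, 0) : 'rV[R]_n * R * R * 'rV[R]_n) (Hc H) (x, t, u, p).
Definition DpH H x t u p : 'rV[R]_n :=
  \row_i 'D_((0, 0, 0, ev i) : 'rV[R]_n * R * R * 'rV[R]_n) (Hc H) (x, t, u, p).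
Definition DppH H x t u p : 'M[R]_n :=
  \matrix_(i, j) 'D_((0, 0, 0, ev j) : 'rV[R]_n * R * R * 'rV[R]_n)
     ('D_((0, 0, 0, ev i) : 'rV[R]_n * R * R * 'rV[R]_n) (Hc H)) (x, t, u, p).

Definition posdef (A : 'M[R]_n) : Prop :=
  forall v : 'rV[R]_n, v != 0 -> 0 < (v *m A *m v^T) 0 0.

Definition uc (u : 'rV[R]_n -> R -> R) (z : 'rV[R]_n * R) : R := u z.1 z.2.
Definition Dx (f : 'rV[R]_n * R -> R) (z : 'rV[R]_n * R) : 'rV[R]_n :=
  \row_i 'D_((ev i, 0) : 'rV[R]_n * R) f z.
Definition Dt (f : 'rV[R]_n * R -> R) (z : 'rV[R]_n * R) : R :=
  'D_((0, 1) : 'rV[R]_n * R) f z.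

Definition C1_on (O : set ('rV[R]_n * R)) (f : 'rV[R]_n * R -> R) : Prop :=
  forall v : 'rV[R]_n * R,
    (forall z, O z -> derivable f z v) /\
    (forall z, O z -> {for z, continuous ('D_v f)}).

Definition strip (T : R) : set ('rV[R]_n * R) := [set z | 0 < z.2 < T].

Definition viscosity_solution (T : R) (H : 'rV[R]_n -> R -> R -> 'rV[R]_n -> R)
  (u0 : 'rV[R]_n -> R) (u : 'rV[R]_n -> R -> R) : Prop :=
  {within [set z : 'rV[R]_n * R | 0 <= z.2 < T], continuous (uc u)} /\
  (forall x, u x 0 = u0 x) /\
  forall phi : 'rV[R]_n * R -> R, C1_on (strip T) phi ->
  forall (x : 'rV[R]_n) (t : R), 0 < t < T ->
    ((\forall z \near (x, t), uc u z - phi z <= uc u (x, t) - phi (x, t)) ->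
       Dt phi (x, t) + H x t (u x t) (Dx phi (x, t)) <= 0) /\
    ((\forall z \near (x, t), uc u (x, t) - phi (x, t) <= uc u z - phi z) ->
       Dt phi (x, t) + H x t (u x t) (Dx phi (x, t)) >= 0).

(* (xi, eta, uxi) is a C^1 solution on [0,t] of the Lie equation: continuous
   on [0,t], and differentiable on (0,t) satisfying the equations there
   (the continuous right-hand side then makes the solution C^1 on [0,t]). *)
Definition lie_solution (H : 'rV[R]_n -> R -> R -> 'rV[R]_n -> R) (t : R)
  (xi eta : R -> 'rV[R]_n) (uxi : R -> R) : Prop :=
  {within [set s : R | 0 <= s <= t], continuous xi} /\
  {within [set s : R | 0 <= s <= t], continuous eta} /\
  {within [set s : R | 0 <= s <= t], continuous uxi} /\
  forall s, 0 < s < t ->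
    [/\ derivable xi s 1, derivable eta s 1, derivable uxi s 1 &
     [/\ derive1 xi s = DpH H (xi s) s (uxi s) (eta s),
        derive1 eta s = - DxH H (xi s) s (uxi s) (eta s)
                    - DuH H (xi s) s (uxi s) (eta s) *: eta s &
        derive1 uxi s = dotv (eta s) (derive1 xi s) - H (xi s) s (uxi s) (eta s)]].

End Defs.

From HB Require Import structures.
From mathcomp Require Import all_boot all_order all_algebra.
From mathcomp Require Import all_classical all_reals all_analysis.
From mathcomp Require Import ring lra.
Import Order.TTheory GRing.Theory Num.Theory.
Import numFieldNormedType.Exports.
Local Open Scope classical_set_scope.
Local Open Scope ring_scope.
Set Implicit Arguments. Unset Strict Implicit.

(* Along the characteristic, eta' = - D_x H - (D_u H) eta, so (H1), (H3) and
   Cauchy-Schwarz give |<w, eta'(s)>| <= |w| c (a + |eta(s)|) with c = C1 + K3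
   and c a = C1 beta.  Gronwall's inequality for |eta| + a, and the integrated
   bound for s |-> |eta(s) - eta(t)| and s |-> |eta(s) - eta(0)|, give all the
   estimates, since eta(t) = D_x u(x,t).  The Euclidean norm is not
   differentiable at 0, so these functions are replaced by the smooth
   surrogates sqrt (d^2 + |.|^2) and d -> 0 at the end.  Only (H1), (H3), (H5)
   and the equation for eta are used: the viscosity property enters only
   through the terminal condition eta(t) = D_x u(x,t). *)

Section EuclideanNorm.
Variables (R : realType) (n : nat).
Implicit Types (a b w : 'rV[R]_n).

Definition enorm2 a : R := \sum_(i < n) a 0 i ^+ 2.

Lemma enorm2_ge0 a : 0 <= enorm2 a.
Proof. by apply: sumr_ge0 => i _; rewrite sqr_ge0. Qed.

Lemma enorm_ge0 a : 0 <= enorm a.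
Proof. exact: sqrtr_ge0. Qed.

Lemma sqr_enorm a : enorm a ^+ 2 = enorm2 a.
Proof. by rewrite sqr_sqrtr // enorm2_ge0. Qed.

Lemma dotvDr a b w : dotv w (a + b) = dotv w a + dotv w b.
Proof. by rewrite /dotv -big_split; apply: eq_bigr => i _; rewrite mxE mulrDr. Qed.

Lemma dotvNr a w : dotv w (- a) = - dotv w a.
Proof. by rewrite /dotv -sumrN; apply: eq_bigr => i _; rewrite mxE mulrN. Qed.

Lemma dotvZr (k : R) a w : dotv w (k *: a) = k * dotv w a.
Proof. by rewrite /dotv mulr_sumr; apply: eq_bigr => i _; rewrite mxE mulrCA. Qed.

Lemma enormZ (k : R) a : enorm (k *: a) = `|k| * enorm a.
Proof.
rewrite /enorm -sqrtr_sqr -sqrtrM ?sqr_ge0 // mulr_sumr.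
by congr Num.sqrt; apply: eq_bigr => i _; rewrite mxE exprMn.
Qed.

Lemma enormB a b : enorm (a - b) = enorm (b - a).
Proof. by rewrite -opprB -scaleN1r enormZ normrN normr1 mul1r. Qed.

Lemma enorm2_eq0 a : (enorm2 a == 0) = (a == 0).
Proof.
rewrite psumr_eq0 => [|i _]; last by rewrite sqr_ge0.
apply/allP/eqP => [h|->]; last by move=> i _; rewrite mxE expr0n eqxx.
apply/rowP => i; have /implyP/(_ isT) := h i (mem_index_enum _).
by rewrite sqrf_eq0 mxE => /eqP.
Qed.

Lemma enorm_eq0 a : (enorm a == 0) = (a == 0).
Proof. by rewrite -sqrf_eq0 sqr_enorm enorm2_eq0. Qed.

Lemma enorm0 : enorm (0 : 'rV[R]_n) = 0.
Proof. by apply/eqP; rewrite enorm_eq0. Qed.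

Lemma cauchy_schwarz a b : `|dotv a b| <= enorm a * enorm b.
Proof.
rewrite -sqrtrM ?enorm2_ge0 // -sqrtr_sqr ler_sqrt ?mulr_ge0 ?enorm2_ge0 //.
have [/eqP|b0] := eqVneq (enorm2 b) 0.
  rewrite enorm2_eq0 => /eqP->; rewrite /dotv big1 ?expr0n ?mulr_ge0 ?enorm2_ge0 //.
  by move=> i _; rewrite mxE mulr0.
have Bgt : 0 < enorm2 b by rewrite lt_def b0 enorm2_ge0.
have expand (p q : R) : \sum_(i < n) (p * a 0 i - q * b 0 i) ^+ 2 =
    p ^+ 2 * enorm2 a - 2 * p * q * dotv a b + q ^+ 2 * enorm2 b.
  rewrite /enorm2 /dotv !mulr_sumr -sumrB -big_split /=.
  by apply: eq_bigr => i _; ring.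
have : 0 <= \sum_(i < n) (enorm2 b * a 0 i - dotv a b * b 0 i) ^+ 2.
  by apply: sumr_ge0 => i _; rewrite sqr_ge0.
rewrite expand => h.
have : 0 <= enorm2 b * (enorm2 a * enorm2 b - dotv a b ^+ 2) by nra.
by rewrite pmulr_rge0 // subr_ge0.
Qed.

End EuclideanNorm.

Section DirectionalDerivative.
Variables (R : realType) (V : normedModType R).
Implicit Types (f : V -> R) (y z v w : V).

Lemma is_derive_line f y v (s : R) : derivable f (y + s *: v) v ->
  is_derive s 1 (fun r : R => f (y + r *: v)) ('D_v f (y + s *: v)).
Proof.
have quotE : (fun h : R => h^-1 *: (((fun r : R => f (y + r *: v)) \o shift s) (h *: 1)
            - f (y + s *: v))) =
         (fun h : R => h^-1 *: ((f \o shift (y + s *: v)) (h *: v) - f (y + s *: v))).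
  apply/funext => h /=; congr (_ *: (_ - _)); congr f.
  by rewrite [h *: 1]mulr1 scalerDl addrCA addrA.
by move=> df; split; rewrite /derivable /derive quotE.
Qed.

Lemma derive_MVT f y v (s : R) : (forall z, derivable f z v) ->
  exists2 c : R, `|c| <= `|s| & f (y + s *: v) - f y = s * 'D_v f (y + c *: v).
Proof.
move=> df; pose g r := f (y + r *: v).
have gd (r : R) : is_derive r (1 : R) g ('D_v f (y + r *: v)) by exact: is_derive_line.
have gc (a b : R) : {within `[a, b], continuous g}.
  by apply: derivable_within_continuous => r _; have [] := gd r.
have g0 : g 0 = f y by rewrite /g scale0r addr0.
have [s0|s0] := leP 0 s.
  have [c + E] := MVT_segment s0 (fun r _ => gd r) (gc 0 s).
  rewrite in_itv /= => /andP[c0 cs]; exists c.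
    by rewrite !ger0_norm // (le_trans c0).
  by rewrite -g0 -/(g s) E subr0 mulrC.
have [c + E] := MVT_segment (ltW s0) (fun r _ => gd r) (gc s 0).
rewrite in_itv /= => /andP[sc c0]; exists c; first by rewrite !ler0_norm ?lerN2 // ltW.
by rewrite -g0 -/(g s); apply: oppr_inj; rewrite opprB E sub0r mulrN mulrC.
Qed.

Lemma derive_norm_le f z v (B : R) : derivable f z v ->
  (forall h : R, h != 0 -> `|h^-1 * (f (h *: v + z) - f z)| <= B) ->
  `|'D_v f z| <= B.
Proof.
move=> /cvgrPdist_le df hB; apply/ler_addgt0Pr => e e0.
have {df} dfe := df e e0; near (0:R)^' => h.
have h0 : h != 0 by near: h; exact: nbhs_dnbhs_neq.
have le_e : `|'D_v f z - h^-1 * (f (h *: v + z) - f z)| <= e by near: h; exact: dfe.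
rewrite -[X in `|X|](subrK (h^-1 * (f (h *: v + z) - f z))).
by rewrite (le_trans (ler_normD _ _)) // addrC lerD // hB.
Unshelve. all: by end_near.
Qed.

Lemma quotient_dirD_MVT f z (a h : R) v w : (forall y, derivable f y v) -> h != 0 ->
  exists2 c : R, `|c| <= `|h * a| &
    h^-1 *: ((f \o shift z) (h *: (a *: v + w)) - f z) =
    a * 'D_v f (z + h *: w + c *: v) + h^-1 *: ((f \o shift z) (h *: w) - f z).
Proof.
move=> dv h0; have [c cle E] := derive_MVT (z + h *: w) (h * a) dv.
exists c => //; rewrite /= /shift /=.
have -> : h *: (a *: v + w) + z = z + h *: w + (h * a) *: v.
  by rewrite scalerDr scalerA addrC addrCA addrC.
rewrite -(subrK (f (z + h *: w)) (f (_ + _))) E [h *: w + z]addrC -addrA scalerDr.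
by congr (_ + _); rewrite -[LHS]/(h^-1 * (h * a * _)) !mulrA mulVf // mul1r.
Qed.

(* Only one of the two directional derivatives needs to be continuous; [f]
   itself need not be differentiable. *)
Lemma deriveZD f z (a : R) v w :
  (forall y, derivable f y v) -> continuous ('D_v f) -> derivable f z w ->
  'D_(a *: v + w) f z = a * 'D_v f z + 'D_w f z.
Proof.
move=> dv cv dw; apply: cvg_lim => //; apply/cvgrPdist_le => e e0.
have e2 : 0 < e / 2 by rewrite divr_gt0.
have ea : 0 < e / 2 / (`|a| + 1) by rewrite divr_gt0 // ltr_wpDl.
move/cvgrPdist_le : dw => /(_ _ e2) dwe.
have /cvgrPdist_le /(_ _ ea) /nbhs_ballP [r r0 rP] := cv z.
set M := `|w| + `|a| * `|v| + 1.
have M0 : 0 < M by rewrite /M ltr_wpDl // addr_ge0 // mulr_ge0.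
near=> h.
have h0 : h != 0 by near: h; exact: nbhs_dnbhs_neq.
have hr : `|h| < r / M by near: h; apply: dnbhs0_lt; rewrite divr_gt0.
have dwh : `|'D_w f z - h^-1 *: ((f \o shift z) (h *: w) - f z)| <= e / 2.
  by near: h; exact: dwe.
have [c cle ->] := quotient_dirD_MVT z a w dv h0.
have near_z : ball z r (z + h *: w + c *: v).
  rewrite -ball_normE /= -addrA opprD addrA subrr sub0r normrN.
  rewrite (le_lt_trans (ler_normD _ _)) // !normrZ.
  have : `|h| * `|w| + `|c| * `|v| <= `|h| * M - `|h|.
    rewrite /M mulrDr mulr1 addrK mulrDr lerD2l mulrA ler_wpM2r //.
    by rewrite (le_trans cle) // normrM.
  move/le_lt_trans; apply.
  have : `|h| * M < r by rewrite -ltr_pdivlMr // mulrC.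
  by have := normr_ge0 h; lra.
have {rP near_z} /= Dv_close := rP _ near_z.
rewrite opprD addrACA -mulrBr (le_trans (ler_normD _ _)) // (splitr e) lerD //.
rewrite normrM (le_trans (ler_wpM2l (normr_ge0 a) Dv_close)) //.
by rewrite mulrCA ger_pMr // ler_pdivrMr ?ltr_wpDl // mul1r lerDl.
Unshelve. all: by end_near.
Qed.

Lemma derive_lincomb (I : Type) (r : seq I) (a : I -> R) (v : I -> V) f z :
  (forall u y, derivable f y u) -> (forall u, continuous ('D_u f)) ->
  'D_(\sum_(j <- r) a j *: v j) f z = \sum_(j <- r) a j * 'D_(v j) f z.
Proof.
move=> dv cv; elim: r => [|j r IH]; first by rewrite !big_nil derive0.
by rewrite !big_cons deriveZD // IH.
Qed.

End DirectionalDerivative.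

Section HamiltonianDerivatives.
Variables (R : realType) (n : nat) (H : 'rV[R]_n -> R -> R -> 'rV[R]_n -> R).
Hypothesis H_C2 : C2 (Hc H).
Local Notation V := ('rV[R]_n * R * R * 'rV[R]_n)%type.

Lemma big_xdir (I : Type) (r : seq I) (a : I -> R) (v : I -> 'rV[R]_n) :
  \sum_(j <- r) a j *: ((v j, 0, 0, 0) : V) = (\sum_(j <- r) a j *: v j, 0, 0, 0).
Proof.
elim: r => [|j r IH]; first by rewrite !big_nil.
rewrite !big_cons IH [LHS]surjective_pairing /= [X in (X, _)]surjective_pairing /=.
by rewrite [X in (X, _, _)]surjective_pairing /= !scaler0 !addr0.
Qed.

Lemma dotv_DxH w y s u p :
  dotv w (DxH H y s u p) = 'D_((w, 0, 0, 0) : V) (Hc H) (y, s, u, p).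
Proof.
case: H_C2 => _ dH.
rewrite {2}(row_sum_delta w) -big_xdir derive_lincomb.
- by apply: eq_bigr => i _; rewrite mxE.
- by move=> v z; have [] := dH v v.
- by move=> v; have [_ []] := dH v v.
Qed.

Lemma dotv_DxH_le (L : R) w y s u p :
  (forall z, `|H y s u p - H z s u p| <= L * enorm (y - z)) ->
  `|dotv w (DxH H y s u p)| <= L * enorm w.
Proof.
move=> HL; rewrite dotv_DxH; apply: derive_norm_le.
  by case: H_C2 => _ /(_ (w, 0, 0, 0) (w, 0, 0, 0)) [].
move=> h h0; rewrite /Hc /= !scaler0 !add0r normrM normfV ler_pdivrMl ?normr_gt0 //.
by rewrite distrC (le_trans (HL _)) // enormB addrK enormZ mulrCA.
Qed.

Lemma norm_DuH_le (K : R) y s u p :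
  (forall v, `|H y s u p - H y s v p| <= K * `|u - v|) -> `|DuH H y s u p| <= K.
Proof.
move=> HK; apply: derive_norm_le.
  by case: H_C2 => _ /(_ (0, 0, 1, 0) (0, 0, 1, 0)) [].
move=> h h0; rewrite /Hc /= !scaler0 !add0r normrM normfV ler_pdivrMl ?normr_gt0 //.
by rewrite distrC (le_trans (HK _)) // distrC addrK [h *: 1]mulr1 mulrC.
Qed.

End HamiltonianDerivatives.

Section RealCalculus.
Variable R : realType.
Implicit Types (f g : R -> R) (a b k M : R).

Lemma is_derive_expRM k (s : R) :
  is_derive s 1 (fun r => expR (k * r)) (k * expR (k * s)).
Proof.
have := is_derive1_comp (is_derive_expR (k * s)) (is_deriveZ k (is_derive_id s 1)).
by rewrite [k *: 1]mulr1 mulrC.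
Qed.

Lemma norm_variation_le f g a b : a <= b ->
  {within `[a, b], continuous f} -> {within `[a, b], continuous g} ->
  (forall s, s \in `]a, b[ -> derivable f s 1) ->
  (forall s, s \in `]a, b[ -> derivable g s 1) ->
  (forall s, s \in `]a, b[ -> `|derive1 f s| <= derive1 g s) ->
  `|f b - f a| <= g b - g a.
Proof.
move=> ab cf cg df dg dfg.
have ndecr (h : R -> R) : (forall s, s \in `]a, b[ -> derivable h s 1) ->
    (forall s, s \in `]a, b[ -> 0 <= derive1 h s) ->
    {within `[a, b], continuous h} -> h a <= h b.
  by move=> dh dh0 ch; exact: (ger0_derive1_ndecr dh dh0 ch (lexx a) ab (lexx b)).
rewrite ler_norml; apply/andP; split.
- suff : g a + f a <= g b + f b by lra.
  apply: (ndecr (g + f)).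
  + move=> s sI; exact: derivableD (dg s sI) (df s sI).
  + move=> s sI; rewrite derive1E (deriveD (dg s sI) (df s sI)).
    by have := dfg s sI; rewrite !derive1E ler_norml => /andP[? _]; lra.
  + by move=> r; exact: (@continuousD _ _ (subspace _) g f r (cg r) (cf r)).
- suff : g a - f a <= g b - f b by lra.
  apply: (ndecr (g - f)).
  + move=> s sI; exact: derivableB (dg s sI) (df s sI).
  + move=> s sI; rewrite derive1E (deriveB (dg s sI) (df s sI)).
    by have := dfg s sI; rewrite !derive1E ler_norml => /andP[_ ?]; lra.
  + by move=> r; exact: (@continuousB _ _ (subspace _) g f r (cg r) (cf r)).
Qed.

Lemma norm_variation_le_expR f M k a b : a <= b ->
  {within `[a, b], continuous f} ->
  (forall s, s \in `]a, b[ -> derivable f s 1) ->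
  (forall s, s \in `]a, b[ -> `|derive1 f s| <= M * (k * expR (k * s))) ->
  `|f b - f a| <= M * (expR (k * b) - expR (k * a)).
Proof.
move=> ab cf df dfM; rewrite mulrBr.
have dg (s : R) :
    is_derive s (1 : R) (M *: fun r => expR (k * r)) (M *: (k * expR (k * s))).
  exact: is_deriveZ (is_derive_expRM k s).
apply: (norm_variation_le (g := M *: fun r => expR (k * r))) => //.
- by apply: derivable_within_continuous => s _; have [] := dg s.
- by move=> s sI; rewrite [X in _ <= X]derive1E derive_val; exact: dfM.
Qed.

Lemma mulr_expR_ndecr f k a b :
  {within `[a, b], continuous f} ->
  (forall s, s \in `]a, b[ -> derivable f s 1) ->
  (forall s, s \in `]a, b[ -> 0 <= derive1 f s + k * f s) ->
  forall x y, a <= x -> x <= y -> y <= b -> f x * expR (k * x) <= f y * expR (k * y).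
Proof.
move=> cf df dfk; apply: (ger0_derive1_ndecr (f := f * fun r => expR (k * r))).
- by move=> s sI; apply: derivableM (df s sI) _; have [] := is_derive_expRM k s.
- move=> s sI; have [dE DE] := is_derive_expRM k s.
  rewrite derive1E (deriveM (df s sI) dE) DE -derive1E /GRing.scale /=.
  by have := dfk s sI; have := expR_gt0 (k * s); nra.
- move=> s; apply: (@continuousM _ (subspace _) f _ s (cf s)).
  by apply: continuous_subspaceT => r; apply: differentiable_continuous;
    apply/derivable1_diffP; have [] := is_derive_expRM k r.
Qed.

Lemma gronwall f k a b :
  {within `[a, b], continuous f} ->
  (forall s, s \in `]a, b[ -> derivable f s 1) ->
  (forall s, s \in `]a, b[ -> `|derive1 f s| <= k * f s) ->
  forall x y, a <= x -> x <= y -> y <= b ->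
  f y <= f x * expR (k * (y - x)) /\ f x <= f y * expR (k * (y - x)).
Proof.
move=> cf df dfk x y ax xy yb.
have shift_exp (z : R) : expR (k * z) * expR (k * (y - x)) = expR (k * (z + y - x)).
  by rewrite -expRD -mulrDr addrA.
split.
- have cNf : {within `[a, b], continuous (- f)}.
    by move=> r; exact: (@continuousN _ _ (subspace _) f r (cf r)).
  have dNf s : s \in `]a, b[ -> derivable (- f) s 1 by move/df/derivableN.
  have dNfk s : s \in `]a, b[ -> 0 <= derive1 (- f) s + - k * (- f) s.
    move=> sI; rewrite (derive1N (df s sI)); change ((- f) s) with (- f s).
    by have := dfk s sI; rewrite ler_norml => /andP[_]; lra.
  have := @mulr_expR_ndecr (- f) (- k) a b cNf dNf dNfk x y ax xy yb.
  rewrite /= !mulNr lerN2.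
  have := shift_exp (- y); rewrite addNr sub0r !mulrN => <- fle.
  by rewrite -(ler_pM2r (expR_gt0 (- (k * y)))) mulrAC (le_trans fle) // mulrA.
- have dfk' s : s \in `]a, b[ -> 0 <= derive1 f s + k * f s.
    by move=> sI; have := dfk s sI; rewrite ler_norml => /andP[]; lra.
  have := @mulr_expR_ndecr f k a b cf df dfk' x y ax xy yb.
  have := shift_exp x; rewrite addrAC subrr add0r => <- fle.
  by rewrite -(ler_pM2r (expR_gt0 (k * x))) (le_trans fle) // mulrA mulrAC.
Qed.

End RealCalculus.

Section SmoothedDistance.
Variables (R : realType) (n : nat).
Implicit Types (W : 'rV[R]_n) (d s : R).

Lemma continuous_enorm2 : continuous (@enorm2 R n).
Proof.
move=> v; apply: (@continuous_big _ _ _ _ _ _ _ _ (fun i (v : 'rV[R]_n) => v 0 i ^+ 2)).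
  exact: add_continuous.
move=> i _ w; apply: (@continuousM _ _ (fun v : 'rV[R]_n => v 0 i) _ w);
  exact: coord_continuous.
Qed.

Lemma is_derive_coord (f : R -> 'rV[R]_n) s (df : 'rV[R]_n) i :
  is_derive s 1 f df -> is_derive s 1 (fun r => f r 0 i) (df 0 i).
Proof.
move=> [/derivable_mxP fd <-]; rewrite derive_mx ?mxE; last exact/derivable_mxP.
exact/derivableP.
Qed.

Lemma is_derive_enorm2 (f : R -> 'rV[R]_n) s (df : 'rV[R]_n) :
  is_derive s 1 f df -> is_derive s 1 (fun r => enorm2 (f r)) (2 * dotv (f s) df).
Proof.
move=> fd.
have sq i : is_derive s 1 (fun r => f r 0 i * f r 0 i)
    (f s 0 i *: df 0 i + f s 0 i *: df 0 i).
  exact: is_deriveM (is_derive_coord i fd) (is_derive_coord i fd).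
have -> : (fun r => enorm2 (f r)) = \sum_(i < n) (fun r => f r 0 i * f r 0 i).
  by apply/funext => r; rewrite fct_sumE; apply: eq_bigr => i _; rewrite expr2.
have -> : 2 * dotv (f s) df = \sum_(i < n) (f s 0 i *: df 0 i + f s 0 i *: df 0 i).
  by rewrite /dotv mulr_sumr; apply: eq_bigr => i _; rewrite -mulr2n mulr_natl.
exact: is_derive_sum.
Qed.

Variable e : R -> 'rV[R]_n.

Definition sdist W d s : R := Num.sqrt (d ^+ 2 + enorm2 (e s - W)).

Lemma sdist_gt0 W d s : 0 < d -> 0 < sdist W d s.
Proof. by move=> d0; rewrite sqrtr_gt0 ltr_pwDl ?enorm2_ge0 // exprn_gt0. Qed.

Lemma enorm_le_sdist W d s : enorm (e s - W) <= sdist W d s.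
Proof. by rewrite ler_sqrt ?lerDr ?sqr_ge0 // addr_ge0 ?sqr_ge0 ?enorm2_ge0. Qed.

Lemma sdist_le W d s : 0 <= d -> sdist W d s <= enorm (e s - W) + d.
Proof.
move=> d0; have n0 := enorm_ge0 (e s - W).
rewrite -(ger0_norm (addr_ge0 n0 d0)) -sqrtr_sqr ler_sqrt ?sqr_ge0 // -sqr_enorm.
nra.
Qed.

Lemma sdist_continuous (A : set R) W d :
  {within A, continuous e} -> {within A, continuous (sdist W d)}.
Proof.
move=> ce s.
have G_cont : continuous (fun v : 'rV[R]_n => Num.sqrt (d ^+ 2 + enorm2 (v - W))).
  move=> v; apply: continuous_comp; last exact: sqrt_continuous.
  apply: continuousD; first exact: cst_continuous.
  apply: continuous_comp; last exact: continuous_enorm2.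
  by apply: continuousB; [exact: cvg_id | exact: cst_continuous].
exact: (@continuous_comp (subspace A) _ _ e _ s (ce s) (G_cont (e s))).
Qed.

Lemma sdist_derive W d s : 0 < d -> derivable e s 1 ->
  derivable (sdist W d) s 1 /\
  derive1 (sdist W d) s = dotv (e s - W) (derive1 e s) / sdist W d s.
Proof.
move=> d0 /derivableP de.
have dB : is_derive s 1 (fun r => e r - W) ('D_1 e s).
  by have := is_deriveB de (is_derive_cst W s 1); rewrite subr0.
have dQ : is_derive s 1 (fun r => d ^+ 2 + enorm2 (e r - W))
    (2 * dotv (e s - W) ('D_1 e s)).
  have := is_deriveD (is_derive_cst (d ^+ 2) s 1) (is_derive_enorm2 dB).
  by rewrite add0r.
have Q0 : 0 < d ^+ 2 + enorm2 (e s - W) by rewrite ltr_pwDl ?enorm2_ge0 ?exprn_gt0.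
have [dS DS] := is_derive1_comp (is_derive1_sqrt Q0) dQ
  (g := fun r => d ^+ 2 + enorm2 (e r - W)).
split; first exact: dS.
rewrite derive1E DS -derive1E -/(sdist W d s).
have := sdist_gt0 W s d0; move: (sdist W d s) => S S0.
by field; rewrite lt0r_neq0.
Qed.

End SmoothedDistance.

Lemma ler_addgt0_mulr (R : realFieldType) (x y z : R) : 0 <= z ->
  (forall d, 0 < d -> x <= y + d * z) -> x <= y.
Proof.
move=> z0 h; apply/ler_addgt0Pr => eps eps0.
have z1 : 0 < z + 1 by rewrite ltr_wpDl.
apply: le_trans (h _ (divr_gt0 eps0 z1)) _; rewrite lerD2l.
by rewrite mulrAC ler_pdivrMr // ler_wpM2l ?ltW //; lra.
Qed.

Section VectorGronwall.
Variables (R : realType) (n : nat) (e : R -> 'rV[R]_n) (t c a : R).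
Hypotheses (t_ge0 : 0 <= t) (c_ge0 : 0 <= c) (a_ge0 : 0 <= a).
Hypothesis e_cont : {within `[0, t], continuous e}.
Hypothesis e_derivable : forall s, s \in `]0, t[ -> derivable e s 1.
Hypothesis dotv_derive_le : forall s, s \in `]0, t[ -> forall w,
  `|dotv w (derive1 e s)| <= enorm w * (c * (a + enorm (e s))).

Lemma sdist_derive_le W d s : 0 < d -> s \in `]0, t[ ->
  `|derive1 (sdist e W d) s| <= c * (a + enorm (e s)).
Proof.
move=> d0 sI; have [_ ->] := sdist_derive W d0 (e_derivable sI).
have S0 := sdist_gt0 e W s d0.
rewrite normrM normfV (gtr0_norm S0) ler_pdivrMr // (le_trans (dotv_derive_le sI _)) //.
by rewrite mulrC ler_wpM2l ?enorm_le_sdist // mulr_ge0 // addr_ge0 // enorm_ge0.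
Qed.

Lemma sdist0_gronwall d : 0 < d -> forall x y, 0 <= x -> x <= y -> y <= t ->
  sdist e 0 d y + a <= (sdist e 0 d x + a) * expR (c * (y - x)) /\
  sdist e 0 d x + a <= (sdist e 0 d y + a) * expR (c * (y - x)).
Proof.
move=> d0; apply: (gronwall (f := sdist e 0 d + cst a)).
- move=> s; apply: (@continuousD _ _ (subspace _) _ (cst a) s).
    exact: sdist_continuous.
  exact: cst_continuous.
- move=> s sI; apply: derivableD; last exact: derivable_cst.
  by have [] := sdist_derive 0 d0 (e_derivable sI).
- move=> s sI.
  have [ds _] := sdist_derive 0 d0 (e_derivable sI).
  rewrite derive1E deriveD // derive_cst addr0 -derive1E.
  rewrite (le_trans (sdist_derive_le 0 d0 sI)) // ler_wpM2l //= addrC lerD2r.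
  by have := enorm_le_sdist e 0 d s; rewrite subr0.
Qed.

Lemma derive_sdist_le_gronwall W d : 0 < d -> forall s, s \in `]0, t[ ->
  `|derive1 (sdist e W d) s| <= c * (sdist e 0 d 0 + a) * expR (c * s) /\
  `|derive1 (sdist e W d) s| <= c * (sdist e 0 d t + a) * expR (c * (t - s)).
Proof.
move=> d0 s sI; have /andP[s0 st] : 0 < s < t by rewrite in_itv in sI.
have Gs : a + enorm (e s) <= sdist e 0 d s + a.
  by rewrite addrC lerD2r; have := enorm_le_sdist e 0 d s; rewrite subr0.
have [G0 _] := sdist0_gronwall d0 (lexx 0) (ltW s0) (ltW st).
have [_ Gt] := sdist0_gronwall d0 (ltW s0) (ltW st) (lexx t).
rewrite subr0 in G0; rewrite -!mulrA; split;
  by rewrite (le_trans (sdist_derive_le W d0 sI)) // ler_wpM2l // (le_trans Gs).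
Qed.

Lemma sdist_variation_le_start W d : 0 < d ->
  `|sdist e W d t - sdist e W d 0| <= (sdist e 0 d 0 + a) * (expR (c * t) - 1).
Proof.
move=> d0; have -> : expR (c * t) - 1 = expR (c * t) - expR (c * 0).
  by rewrite mulr0 expR0.
apply: (@norm_variation_le_expR _ (sdist e W d) _ c 0 t t_ge0).
- exact: sdist_continuous.
- by move=> s sI; have [] := sdist_derive W d0 (e_derivable sI).
- move=> s sI; have [le_d _] := derive_sdist_le_gronwall W d0 sI.
  by rewrite mulrA [_ * c]mulrC.
Qed.

Lemma sdist_variation_le_end W d : 0 < d ->
  `|sdist e W d t - sdist e W d 0| <= (sdist e 0 d t + a) * (expR (c * t) - 1).
Proof.
move=> d0; set M := - ((sdist e 0 d t + a) * expR (c * t)).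
have -> : (sdist e 0 d t + a) * (expR (c * t) - 1) =
    M * (expR (- c * t) - expR (- c * 0)).
  by rewrite /M mulr0 expR0 !mulNr expRN; field; rewrite expR_eq0.
apply: (@norm_variation_le_expR _ (sdist e W d) _ (- c) 0 t t_ge0).
- exact: sdist_continuous.
- by move=> s sI; have [] := sdist_derive W d0 (e_derivable sI).
- move=> s sI; have [_ le_d] := derive_sdist_le_gronwall W d0 sI.
  apply: (le_trans le_d); rewrite /M mulrBr expRD !mulNr le_eqVlt.
  by apply/orP; left; apply/eqP; ring.
Qed.

Let expR_ge1 : 1 <= expR (c * t).
Proof. by rewrite -expR0 ler_expR mulr_ge0. Qed.

Lemma enorm_sub_le_end :
  enorm (e t - e 0) <= (a + enorm (e t)) * (expR (c * t) - 1).
Proof.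
apply: (ler_addgt0_mulr (expR_ge0 (c * t))) => d d0.
have K0 := enorm_le_sdist e (e t) d 0.
have := sdist_le e (e t) t (ltW d0); rewrite subrr enorm0 add0r => Kt.
have := sdist_le e 0 t (ltW d0); rewrite subr0 => Gt.
have /ler_normlP[V _] := sdist_variation_le_end (e t) d0.
rewrite enormB; have := expR_ge1; nra.
Qed.

Lemma enorm_sub_le_start :
  enorm (e t - e 0) <= (a + enorm (e 0)) * (expR (c * t) - 1).
Proof.
apply: (ler_addgt0_mulr (expR_ge0 (c * t))) => d d0.
have Kt := enorm_le_sdist e (e 0) d t.
have := sdist_le e (e 0) 0 (ltW d0); rewrite subrr enorm0 add0r => K0.
have := sdist_le e 0 0 (ltW d0); rewrite subr0 => G0.
have /ler_normlP[_ V] := sdist_variation_le_start (e 0) d0.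
have := expR_ge1; nra.
Qed.

Lemma enorm_growth :
  enorm (e t) + a <= (enorm (e 0) + a) * expR (c * t) /\
  enorm (e 0) + a <= (enorm (e t) + a) * expR (c * t).
Proof.
have Ee := expR_ge0 (c * t).
split; apply: (ler_addgt0_mulr Ee) => d d0.
- have [G _] := sdist0_gronwall d0 (lexx 0) t_ge0 (lexx t).
  have := enorm_le_sdist e 0 d t; have := sdist_le e 0 0 (ltW d0).
  rewrite !subr0 in G *; nra.
- have [_ G] := sdist0_gronwall d0 (lexx 0) t_ge0 (lexx t).
  have := enorm_le_sdist e 0 d 0; have := sdist_le e 0 t (ltW d0).
  rewrite !subr0 in G *; nra.
Qed.

End VectorGronwall.

Section LieCharacteristics.
Variables (R : realType) (n : nat) (T : R).
Variables (H : 'rV[R]_n -> R -> R -> 'rV[R]_n -> R) (C1 beta K3 : R).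
Variables (t : R) (xi eta : R -> 'rV[R]_n) (uxi : R -> R).
Hypotheses (C1_ge0 : 0 <= C1) (K3_ge0 : 0 <= K3).
Hypothesis H_C2 : C2 (Hc H).
Hypothesis H1 : forall y z s v p, 0 <= s <= T ->
  `|H y s v p - H z s v p| <= C1 * (beta + enorm p) * enorm (y - z).
Hypothesis H3 : forall y s v w p, 0 <= s <= T ->
  `|H y s v p - H y s w p| <= K3 * `|v - w|.
Hypothesis t_in : 0 < t < T.
Hypothesis lie : lie_solution H t xi eta uxi.

Local Notation c := (C1 + K3).

Lemma lie_dotv_deta_le s w : s \in `]0, t[ ->
  `|dotv w (derive1 eta s)| <= enorm w * (C1 * beta + c * enorm (eta s)).
Proof.
rewrite in_itv => /= sI; case: lie => _ [_ [_ /(_ s sI) [_ _ _ [_ -> _]]]].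
have sT : 0 <= s <= T.
  by case/andP: sI t_in => s0 st /andP[_ tT]; rewrite ltW //= ltW // (lt_trans st).
have DxH_le := dotv_DxH_le H_C2 w (fun z => H1 (xi s) z (uxi s) (eta s) sT).
have DuH_le := norm_DuH_le H_C2 (fun v => H3 (xi s) (uxi s) v (eta s) sT).
rewrite dotvDr !dotvNr dotvZr -opprD normrN (le_trans (ler_normD _ _)) // normrM.
have := ler_pM (normr_ge0 _) (normr_ge0 _) DuH_le (cauchy_schwarz w (eta s)).
have := enorm_ge0 w; have := enorm_ge0 (eta s); nra.
Qed.

Lemma lie_eta_bounds a : 0 <= a -> C1 * beta = c * a ->
  [/\ enorm (eta t - eta 0) <= (a + enorm (eta t)) * (expR (c * t) - 1),
      enorm (eta t - eta 0) <= (a + enorm (eta 0)) * (expR (c * t) - 1),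
      enorm (eta 0) * expR (- (c * t)) - a * (1 - expR (- (c * t))) <= enorm (eta t) &
      enorm (eta t) <= enorm (eta 0) * expR (c * t) + a * (expR (c * t) - 1)].
Proof.
move=> a_ge0 C1beta; have c_ge0 : 0 <= c by rewrite addr_ge0.
have t_ge0 : 0 <= t by case/andP: t_in => /ltW.
case: (lie) => _ [eta_cont [_ eta_deriv]].
have eta_cont' : {within `[0, t], continuous eta}.
  suff -> : [set` `[0, t]] = [set s | 0 <= s <= t] by [].
  by apply/seteqP; split=> s /=; rewrite in_itv.
have eta_derivable s : s \in `]0, t[ -> derivable eta s 1.
  by rewrite in_itv => /eta_deriv [].
have deta_le s : s \in `]0, t[ -> forall w,
    `|dotv w (derive1 eta s)| <= enorm w * (c * (a + enorm (eta s))).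
  by move=> sI w; rewrite mulrDr -C1beta; exact: lie_dotv_deta_le.
have [Gt G0] := enorm_growth t_ge0 c_ge0 a_ge0 eta_cont' eta_derivable deta_le.
split.
- exact: enorm_sub_le_end eta_cont' eta_derivable deta_le.
- exact: enorm_sub_le_start eta_cont' eta_derivable deta_le.
- have := ler_wpM2r (expR_ge0 (- (c * t))) G0.
  by rewrite -mulrA expRxMexpNx_1 mulr1; lra.
- lra.
Qed.

End LieCharacteristics.

Theorem proposition4p1 (R : realType) (n : nat) (T : R)
  (H : 'rV[R]_n -> R -> R -> 'rV[R]_n -> R) (u0 : 'rV[R]_n -> R)
  (C1 beta A2 B2 K3 : R) (u : 'rV[R]_n -> R -> R)
  (x : 'rV[R]_n) (t : R) (xi eta : R -> 'rV[R]_n) (uxi : R -> R) :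
  0 < T ->
  (exists L : R, forall y z, `|u0 y - u0 z| <= L * enorm (y - z)) ->
  0 <= C1 -> (beta = 0 \/ beta = 1) ->
  (forall y z s v p, 0 <= s <= T ->
     `|H y s v p - H z s v p| <= C1 * (beta + enorm p) * enorm (y - z)) ->
  0 <= A2 -> 0 <= B2 ->
  (forall y s v p q, 0 <= s <= T ->
     `|H y s v p - H y s v q| <= (A2 * enorm y + B2) * enorm (p - q)) ->
  0 <= K3 ->
  (forall y s v w p, 0 <= s <= T ->
     `|H y s v p - H y s w p| <= K3 * `|v - w|) ->
  (forall y s v p q (l : R), 0 <= s <= T -> 0 <= l <= 1 ->
     H y s v (l *: p + (1 - l) *: q) <= l * H y s v p + (1 - l) * H y s v q) ->
  C2 (Hc H) ->
  (forall y s v p, 0 <= s <= T -> posdef (DppH H y s v p)) ->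
  viscosity_solution T H u0 u ->
  0 < t < T ->
  differentiable (uc u) (x, t) ->
  lie_solution H t xi eta uxi ->
  xi t = x -> eta t = Dx (uc u) (x, t) -> uxi t = u x t ->
  let Du := Dx (uc u) (x, t) in
  let c := C1 + K3 in
  [/\ (C1, K3) != (0, 0) ->
        [/\ enorm (Du - eta 0) <= (C1 * beta / c + enorm Du) * (expR (c * t) - 1),
            enorm (Du - eta 0) <= (C1 * beta / c + enorm (eta 0)) * (expR (c * t) - 1) &
            (enorm (eta 0) * expR (- (c * t)) - C1 * beta / c * (1 - expR (- (c * t)))
              <= enorm Du /\
            enorm Du <= enorm (eta 0) * expR (c * t) + C1 * beta / c * (expR (c * t) - 1))],
      K3 = 0 ->
        enorm (eta 0) * expR (- (C1 * t)) - beta * (1 - expR (- (C1 * t))) <= enorm Du /\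
        enorm Du <= enorm (eta 0) * expR (C1 * t) + beta * (expR (C1 * t) - 1),
      beta = 0 ->
        enorm (eta 0) * expR (- (c * t)) <= enorm Du /\
        enorm Du <= enorm (eta 0) * expR (c * t),
      C1 = 0 ->
        enorm (eta 0) * expR (- (K3 * t)) <= enorm Du /\
        enorm Du <= enorm (eta 0) * expR (K3 * t) &
      (C1, K3) = (0, 0) -> Du = eta 0].
Proof.
move=> _ _ C1_ge0 beta01 H1 _ _ _ K3_ge0 H3 _ H_C2 _ _ t_in _ lie _ eta_t _ /=.
rewrite -eta_t; have beta_ge0 : 0 <= beta by case: beta01 => ->.
have bounds (a : R) := lie_eta_bounds C1_ge0 K3_ge0 H_C2 H1 H3 t_in lie (a := a).
split.
- move=> CK_neq0; have c_neq0 : C1 + K3 != 0.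
    by apply: contraNneq CK_neq0 => /eqP; rewrite paddr_eq0 // => /andP[/eqP-> /eqP->].
  have [||d_end d_start lo up] := bounds (C1 * beta / (C1 + K3)).
  + by rewrite !divr_ge0 ?addr_ge0 ?mulr_ge0.
  + by rewrite mulrCA mulfV ?mulr1.
  + by split.
- move=> K3_0; have [|_ _ lo up] := bounds beta beta_ge0.
    by rewrite K3_0 addr0.
  by rewrite K3_0 addr0 in lo up.
- move=> beta0; have [|_ _ lo up] := bounds 0 (lexx 0).
    by rewrite beta0 !mulr0.
  by rewrite mul0r subr0 in lo; rewrite mul0r addr0 in up.
- move=> C1_0; have [|_ _ lo up] := bounds 0 (lexx 0).
    by rewrite C1_0 mul0r mulr0.
  by rewrite C1_0 add0r mul0r subr0 in lo; rewrite C1_0 add0r mul0r addr0 in up.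
- case=> C1_0 K3_0; have [|le0 _ _ _] := bounds 0 (lexx 0).
    by rewrite C1_0 mul0r mulr0.
  rewrite C1_0 K3_0 addr0 !mul0r expR0 subrr mulr0 in le0.
  by apply/eqP; rewrite -subr_eq0 -enorm_eq0 eq_le le0 enorm_ge0.
Qed.
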